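(* Let $n\ge 1$ and let $A\in\mathcal{E}_n$ have rank $r$ (as an abelian group). Then there exists a finite set $E$ of mod-linear functions $l:\mathbb{Z}^{2n}\to\mathbb{Z}$ of order $\le r$ such that for all integers $a_1\le b_1,\dots,a_n\le b_n$ the following are equivalent: (i) there exists $(x_1,\dots,x_n)\in A$ with $a_i\le x_i\le b_i$ for all $i=1,\dots,n$; (ii) $0\le l(a_1,b_1,a_2,b_2,\dots,a_n,b_n)$ for every $l\in E$.
   Context: For $v=(v_1,\dots,v_n),w=(w_1,\dots,w_n)\in\mathbb{Z}^n$ write $v\mid w$ if $v_i$ divides $w_i$ for every $i$ with $v_i\neq 0$. For $v\in\mathbb{Q}^n$ with support $S=\{i: v_i\neq 0\}$ of size $s$, define the linear map $L_v:\mathbb{Q}^n\to\mathbb{Q}^{\binom{s}{2}+n-s}$ by $L_v(t_1,\dots,t_n)=\big((\tfrac{t_i}{v_i}-\tfrac{t_j}{v_j})_{i<j,\ i,j\in S},\ (t_k)_{k\notin S}\big)$, where the pairs $(i,j)$ are listed in lexicographic order and then the $t_k$, $k\notin S$, in increasing order of $k$. The class $\mathcal{E}_n$ of subgroups of $\mathbb{Z}^n$ is defined inductively: a nonzero subgroup $A\subseteq\mathbb{Z}^n$ belongs to $\mathcal{E}_n$ iff there is a nonzero $v\in A$ with (1) $v\mid w$ for all $w\in A$, and (2) $L_v(A)=\{0\}$ or $L_v(A)\in\mathcal{E}_{\binom{s}{2}+n-s}$ (where $s$ is the number of nonzero components of $v$; under (1), $L_v(A)\subseteq\mathbb{Z}^{\binom{s}{2}+n-s}$).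 Mod-linear functions $l:\mathbb{Z}^N\to\mathbb{Z}$ of order $\le r$ are defined inductively: those of order $\le 0$ are the coordinate projections $(x_1,\dots,x_N)\mapsto x_i$; for $r>0$, $l$ has order $\le r$ if there are mod-linear functions $l_1,l_2$ of order $\le r-1$ and nonzero integers $m_1,m_2$ with $l(x)=\lfloor l_1(x)/m_1\rfloor-\lceil l_2(x)/m_2\rceil$ for all $x\in\mathbb{Z}^N$. *)

(* Vectors of Z^n are represented as sequences of integers
   of size n; subsets of Z^n as predicates on seq int. *)
From HB Require Import structures.
From mathcomp Require Import all_boot all_order all_algebra.
From Stdlib Require List.
Set Implicit Arguments. Unset Strict Implicit. Unset Printing Implicit Defensive.
Import Order.TTheory GRing.Theory Num.Theory.
Local Open Scope ring_scope.

Definition vzero (n : nat) : seq int := nseq n 0.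
Definition vadd (x y : seq int) : seq int := [seq p.1 + p.2 | p <- zip x y].
Definition vopp (x : seq int) : seq int := [seq - a | a <- x].
Definition vscale (c : int) (x : seq int) : seq int := [seq c * a | a <- x].

Definition subgroup (n : nat) (A : seq int -> Prop) : Prop :=
  [/\ forall x, A x -> size x = n,
      A (vzero n),
      forall x y, A x -> A y -> A (vadd x y)
    & forall x, A x -> A (vopp x)].

Definition vdiv (v w : seq int) : Prop :=
  forall i : nat, v`_i != 0 -> (v`_i %| w`_i)%Z.

Definition supp (n : nat) (v : seq int) : seq nat := [seq i <- iota 0 n | v`_i != 0].
Definition nsupp (n : nat) (v : seq int) : seq nat := [seq i <- iota 0 n | v`_i == 0].

Definition Ldim (n : nat) (v : seq int) : nat :=
  ('C(size (supp n v), 2) + (n - size (supp n v)))%N.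

(* the linear map L_v : Q^n -> Q^(binom(s,2)+n-s), applied to integer vectors,
   with pairs (i,j), i<j in S, in lexicographic order, then t_k, k notin S *)
Definition Lv (n : nat) (v : seq int) (t : seq int) : seq rat :=
  [seq (t`_ij.1)%:~R / (v`_ij.1)%:~R - (t`_ij.2)%:~R / (v`_ij.2)%:~R
     | ij <- [seq (i, j) | i <- supp n v, j <- [seq j <- supp n v | (i < j)%N]]]
  ++ [seq (t`_k)%:~R | k <- nsupp n v].

Definition LvImage (n : nat) (v : seq int) (A : seq int -> Prop) : seq int -> Prop :=
  fun u => exists t, A t /\ [seq (a%:~R : rat) | a <- u] = Lv n v t.

Inductive classE : nat -> (seq int -> Prop) -> Prop :=
| classE_intro (n : nat) (A : seq int -> Prop) (v : seq int) :
    subgroup n A ->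
    A v -> v != vzero n ->
    (forall w, A w -> vdiv v w) ->
    ((forall u, LvImage n v A u <-> u = vzero (Ldim n v))
     \/ classE (Ldim n v) (LvImage n v A)) ->
    classE n A.

Definition lincomb (n : nat) (c : seq int) (xs : seq (seq int)) : seq int :=
  foldr vadd (vzero n) [seq vscale p.1 p.2 | p <- zip c xs].

Definition lin_indep (n : nat) (xs : seq (seq int)) : Prop :=
  forall c : seq int, size c = size xs ->
    lincomb n c xs = vzero n -> c = nseq (size c) 0.

Definition grank (n : nat) (A : seq int -> Prop) (r : nat) : Prop :=
  (exists xs : seq (seq int),
      size xs = r /\ (forall x, List.In x xs -> A x) /\ lin_indep n xs) /\
  (forall ys : seq (seq int),
      (forall y, List.In y ys -> A y) -> lin_indep n ys -> (size ys <= r)%N).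

Inductive modlin (N : nat) : nat -> (seq int -> int) -> Prop :=
| modlin_proj (i : nat) : (i < N)%N -> modlin N 0 (fun x => x`_i)
| modlin_step (r : nat) (l1 l2 : seq int -> int) (m1 m2 : int) :
    modlin N r l1 -> modlin N r l2 -> m1 != 0 -> m2 != 0 ->
    modlin N r.+1 (fun x => Num.floor ((l1 x)%:~R / (m1%:~R) : rat)
                           - Num.ceil ((l2 x)%:~R / (m2%:~R) : rat)).

Definition interleave (a b : seq int) : seq int :=
  flatten [seq [:: p.1; p.2] | p <- zip a b].

(* Let v be the distinguished element of A, with support S.  For y in A and i in S,
   a_i <= y_i <= b_i says that the integer y_i / v_i lies in an interval [lo_i, hi_i]
   whose ends are ceilings and floors of a_i / v_i and b_i / v_i.  Adding multiples of v
   shifts all these quotients together, so by one-dimensional Helly the box meets A iff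
   every [lo_i, hi_i] is nonempty and some t in A has
   lo_i - hi_j <= t_i / v_i - t_j / v_j <= hi_i - lo_j on S and a_k <= t_k <= b_k off S:
   a box problem for L_v(A) whose bounds are mod-linear of one order more.  Recursing
   along the derivation of A in E_n gives tests of order its depth d; when L_v(A) = 0
   the last problem only asks the bounds to straddle 0, one more floor/ceiling step.
   Finally d <= r, since v together with preimages of an independent family of L_v(A)
   is independent. *)

From HB Require Import structures.
From mathcomp Require Import all_boot all_order all_algebra.
From mathcomp Require Import ring zify.
From Stdlib Require List.
From Stdlib Require Import FunctionalExtensionality.
Set Implicit Arguments. Unset Strict Implicit. Unset Printing Implicit Defensive.
Import Order.TTheory GRing.Theory Num.Theory.
Local Open Scope ring_scope.

Definition floor_div (z m : int) : int := Num.floor (z%:~R / m%:~R : rat).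
Definition ceil_div (z m : int) : int := Num.ceil (z%:~R / m%:~R : rat).

Lemma floor_divZ c z m : c != 0 -> floor_div (c * z) (c * m) = floor_div z m.
Proof. by move=> c0; rewrite /floor_div !intrM -mulf_div divff ?mul1r ?intr_eq0. Qed.

Lemma ceil_divZ c z m : c != 0 -> ceil_div (c * z) (c * m) = ceil_div z m.
Proof. by move=> c0; rewrite /ceil_div !intrM -mulf_div divff ?mul1r ?intr_eq0. Qed.

Lemma floor_divN z m : floor_div (- z) m = floor_div z (- m).
Proof. by rewrite /floor_div !mulrNz invrN mulrN mulNr. Qed.

Lemma ceil_divN z m : ceil_div (- z) m = ceil_div z (- m).
Proof. by rewrite /ceil_div !mulrNz invrN mulrN mulNr. Qed.

Lemma floor_div1 z : floor_div z 1 = z.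
Proof. by rewrite /floor_div divr1 intrKfloor. Qed.

Lemma ceil_divN1 z : ceil_div z (-1) = - z.
Proof. by rewrite /ceil_div mulrNz invrN invr1 mulrN1 -mulrNz intrKceil. Qed.

Lemma floor_div1_ceil_div2_ge0 z : (0 <= floor_div z 1 - ceil_div z 2) = (0 <= z).
Proof.
rewrite floor_div1 subr_ge0 /ceil_div ceil_le_int ler_pdivrMr ?ltr0n //.
by rewrite -[_ * 2%:~R]intrM ler_int; apply/idP/idP; lia.
Qed.

Definition div_lo (a b v : int) : int := ceil_div (if 0 < v then a else b) v.
Definition div_hi (a b v : int) : int := floor_div (if 0 < v then b else a) v.

Lemma mul_bounds_div (a b v q : int) : v != 0 ->
  (a <= q * v <= b) = (div_lo a b v <= q <= div_hi a b v).
Proof.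
move=> v0; rewrite /div_lo /div_hi /ceil_div /floor_div.
case: (ltrgtP 0 v) => [vp|vn|v_eq0]; last by rewrite -v_eq0 eqxx in v0.
- rewrite ceil_le_int floor_ge_int ler_pdivrMr ?ltr0z // ler_pdivlMr ?ltr0z //.
  by rewrite -!intrM !ler_int.
- rewrite ceil_le_int floor_ge_int ler_ndivrMr ?ltrz0 // ler_ndivlMr ?ltrz0 //.
  by rewrite -!intrM !ler_int andbC.
Qed.

(* Mod-linear functions of order at most [r]: unlike [modlin], the order can be
   raised for free; [modlin] is recovered up to a positive factor below. *)
Inductive mod_linear (N : nat) : nat -> (seq int -> int) -> Prop :=
| mod_linear_proj i : (i < N)%N -> mod_linear N 0 (fun x => x`_i)
| mod_linear_lift r f : mod_linear N r f -> mod_linear N r.+1 f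
| mod_linear_step r f1 f2 m1 m2 :
    mod_linear N r f1 -> mod_linear N r f2 -> m1 != 0 -> m2 != 0 ->
    mod_linear N r.+1 (fun x => floor_div (f1 x) m1 - ceil_div (f2 x) m2).

Lemma modlin_ext N r f g : modlin N r f -> f =1 g -> modlin N r g.
Proof. by move=> + /functional_extensionality <-. Qed.

Lemma mod_linear_ext N r f g : mod_linear N r f -> f =1 g -> mod_linear N r g.
Proof. by move=> + /functional_extensionality <-. Qed.

Lemma mod_linear_mono N r r' f : (r <= r')%N -> mod_linear N r f -> mod_linear N r' f.
Proof.
move=> /subnK <-; elim: (r' - r)%N => [|k IHk] fr //.
by rewrite addSn; apply/mod_linear_lift/IHk.
Qed.

(* A lift is simulated by [floor (f / 1) - ceil (f / -1) = 2 f]. *)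
Lemma mod_linear_modlin N r f :
  mod_linear N r f -> exists2 c : int, 0 < c & modlin N r (fun x => c * f x).
Proof.
elim=> {r f} [i iN | r f _ [c c_gt0 cf]
             | r f1 f2 m1 m2 _ [c1 c1_gt0 cf1] _ [c2 c2_gt0 cf2] m1_0 m2_0].
- by exists 1 => //; apply: modlin_ext (modlin_proj iN) _ => x; rewrite mul1r.
- exists (2 * c); first by rewrite mulr_gt0.
  apply: modlin_ext (modlin_step cf cf (oner_neq0 _) (isT : (-1 : int) != 0)) _ => x.
  rewrite -[Num.floor _]/(floor_div _ 1) -[Num.ceil _]/(ceil_div _ (-1)).
  by rewrite floor_div1 ceil_divN1; ring.
- exists 1 => //.
  have [c1_0 c2_0] : c1 != 0 /\ c2 != 0 by rewrite !gt_eqF.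
  apply: modlin_ext (modlin_step cf1 cf2 (mulf_neq0 c1_0 m1_0) (mulf_neq0 c2_0 m2_0)) _ => x.
  rewrite -[Num.floor _]/(floor_div _ _) -[Num.ceil _]/(ceil_div _ _).
  by rewrite floor_divZ // ceil_divZ // mul1r.
Qed.

(* Negation is not free, since [ceil (z / m) - floor (z' / m')] is not a step: bounds
   are tracked up to sign. *)
Definition smod_linear N r (f : seq int -> int) :=
  mod_linear N r f \/ mod_linear N r (fun x => - f x).

Lemma smod_linear_ext N r f g : smod_linear N r f -> f =1 g -> smod_linear N r g.
Proof. by move=> + /functional_extensionality <-. Qed.

Lemma smod_linearN N r f : smod_linear N r f -> smod_linear N r (fun x => - f x).
Proof. by case=> fr; [right | left]; apply: mod_linear_ext fr _ => x; rewrite ?opprK. Qed.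

Lemma smod_linear_lift N r f : smod_linear N r f -> smod_linear N r.+1 f.
Proof. by case=> fr; [left | right]; apply: mod_linear_lift. Qed.

Lemma mod_linear_step_signed N r f1 f2 m1 m2 :
  smod_linear N r f1 -> smod_linear N r f2 -> m1 != 0 -> m2 != 0 ->
  mod_linear N r.+1 (fun x => floor_div (f1 x) m1 - ceil_div (f2 x) m2).
Proof.
move=> f1r f2r m1_0 m2_0.
have [g1 [k1 [g1r k1_0 Eg1]]] : exists g1 k1, [/\ mod_linear N r g1, k1 != 0
    & forall x, floor_div (f1 x) m1 = floor_div (g1 x) k1].
  case: f1r => f1r; first by exists f1, m1.
  exists (fun x => - f1 x), (- m1); rewrite oppr_eq0.
  by split=> // x; rewrite floor_divN opprK.
have [g2 [k2 [g2r k2_0 Eg2]]] : exists g2 k2, [/\ mod_linear N r g2, k2 != 0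
    & forall x, ceil_div (f2 x) m2 = ceil_div (g2 x) k2].
  case: f2r => f2r; first by exists f2, m2.
  exists (fun x => - f2 x), (- m2); rewrite oppr_eq0.
  by split=> // x; rewrite ceil_divN opprK.
by apply: mod_linear_ext (mod_linear_step g1r g2r k1_0 k2_0) _ => x; rewrite Eg1 Eg2.
Qed.

Lemma size_vzero n : size (vzero n) = n.
Proof. exact: size_nseq. Qed.

Lemma nth_vzero n i : (vzero n)`_i = 0.
Proof. by rewrite nth_nseq if_same. Qed.

Lemma size_vadd x y : size (vadd x y) = minn (size x) (size y).
Proof. by rewrite size_map size_zip. Qed.

Lemma nth_vadd x y i : size x = size y -> (vadd x y)`_i = x`_i + y`_i.
Proof.
move=> sxy; have [ix | xi] := ltnP i (size x).
  by rewrite (nth_map (0, 0)) ?nth_zip ?size_zip -?sxy ?minnn.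
by rewrite !nth_default ?size_vadd -?sxy ?minnn ?addr0.
Qed.

Lemma size_vscale c x : size (vscale c x) = size x.
Proof. exact: size_map. Qed.

Lemma nth_vscale c x i : (vscale c x)`_i = c * x`_i.
Proof.
have [ix | xi] := ltnP i (size x); first by rewrite (nth_map 0).
by rewrite !nth_default ?size_vscale ?mulr0.
Qed.

Lemma nth_vopp x i : (vopp x)`_i = - x`_i.
Proof.
have [ix | xi] := ltnP i (size x); first by rewrite (nth_map 0).
by rewrite !nth_default ?size_map ?oppr0.
Qed.

Lemma subgroup_vscale n A x c : subgroup n A -> A x -> A (vscale c x).
Proof.
case=> sizeA A0 AD AN Ax.
have sx := sizeA _ Ax.
have Anat k : A (vscale k%:Z x).
  elim: k => [|k IHk].
    suff -> : vscale 0 x = vzero n by [].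
    apply: (@eq_from_nth _ 0); first by rewrite size_vscale size_vzero.
    by move=> i _; rewrite nth_vscale nth_vzero mul0r.
  suff -> : vscale k.+1%:Z x = vadd x (vscale k x) by apply: AD.
  apply: (@eq_from_nth _ 0); first by rewrite size_vadd !size_vscale minnn.
  by move=> i _; rewrite nth_vadd ?size_vscale // !nth_vscale intS mulrDl mul1r.
case: c => k; first exact: Anat.
suff -> : vscale (Negz k) x = vopp (vscale k.+1 x) by apply: AN.
apply: (@eq_from_nth _ 0); first by rewrite !size_map.
by move=> i _; rewrite nth_vopp !nth_vscale NegzE mulNr.
Qed.

Lemma size_lincomb n c xs : size c = size xs ->
  (forall x, x \in xs -> size x = n) -> size (lincomb n c xs) = n.
Proof.
elim: xs c => [|x xs IH] [|c0 c] //=; first by rewrite size_vzero.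
move=> [sc] sxs; rewrite size_vadd size_vscale sxs ?mem_head // -/(lincomb n c xs).
by rewrite IH ?minnn // => y y_xs; apply: sxs; rewrite in_cons y_xs orbT.
Qed.

Lemma nth_lincomb n c xs i : size c = size xs -> (forall x, x \in xs -> size x = n) ->
  (lincomb n c xs)`_i = \sum_(m < size xs) c`_m * (nth [::] xs m)`_i.
Proof.
elim: xs c => [|x xs IH] [|c0 c] //=; first by rewrite big_ord0 nth_vzero.
move=> [sc] sxs; have sxs' y : y \in xs -> size y = n.
  by move=> y_xs; apply: sxs; rewrite in_cons y_xs orbT.
rewrite -/(lincomb n c xs) nth_vadd; last by rewrite size_vscale size_lincomb // sxs ?mem_head.
by rewrite big_ord_recl nth_vscale IH.
Qed.

Lemma exists_nth_neq0 n v : size v = n -> v != vzero n -> exists2 i, (i < n)%N & v`_i != 0.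
Proof.
move=> sv v_nz; have [|/hasPn no_nz] := boolP (has (fun i => v`_i != 0) (iota 0 n)).
  by case/hasP => i; rewrite mem_iota => /andP [_ i_n] vi; exists i.
case/eqP: v_nz; apply: (@eq_from_nth _ 0) => [|i]; first by rewrite size_vzero.
by rewrite sv nth_vzero => i_n; apply/eqP; move: (no_nz i); rewrite mem_iota i_n negbK; apply.
Qed.

Lemma sumn_count_gt (s : seq nat) :
  uniq s -> sumn [seq count (fun j => (i < j)%N) s | i <- s] = 'C(size s, 2).
Proof.
elim: s => [|x s IH] //= /andP [x_s us].
rewrite ltnn add0n binS bin1 -(IH us) !sumnE !big_map big_split /=.
have -> : (\sum_(i <- s) (i < x)%N)%N = count (predC (fun j => (x < j)%N)) s.
  rewrite -sumn_count sumnE big_map; apply: eq_big_seq => i i_s /=.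
  have : i != x by apply: contraNneq x_s => <-.
  lia.
by rewrite addnA count_predC addnC.
Qed.

Definition Lpairs n v : seq (nat * nat) :=
  [seq (i, j) | i <- supp n v, j <- [seq j <- supp n v | (i < j)%N]].

Definition Lindex n v : seq ((nat * nat) + nat) :=
  [seq inl ij | ij <- Lpairs n v] ++ [seq inr k | k <- nsupp n v].

Definition Lcoord (v t : seq int) (d : (nat * nat) + nat) : rat :=
  match d with
  | inl (i, j) => (t`_i)%:~R / (v`_i)%:~R - (t`_j)%:~R / (v`_j)%:~R
  | inr k => (t`_k)%:~R
  end.

Lemma Lv_Lcoord n v t : Lv n v t = map (Lcoord v t) (Lindex n v).
Proof. by rewrite /Lv /Lindex map_cat -!map_comp; congr (_ ++ _); apply: eq_map => -[]. Qed.

Lemma size_Lindex n v : size (Lindex n v) = Ldim n v.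
Proof.
rewrite /Ldim size_cat !size_map /Lpairs size_allpairs_dep.
under eq_map do rewrite size_filter.
rewrite sumn_count_gt ?filter_uniq ?iota_uniq //; congr (_ + _)%N.
rewrite /nsupp /supp !size_filter -{2}(size_iota 0 n) -(count_predC (fun i => v`_i != 0)).
by rewrite addKn; apply: eq_count => i /=; rewrite negbK.
Qed.

Lemma mem_supp n v i : (i \in supp n v) = (i < n)%N && (v`_i != 0).
Proof. by rewrite mem_filter mem_iota andbC. Qed.

Lemma mem_nsupp n v i : (i \in nsupp n v) = (i < n)%N && (v`_i == 0).
Proof. by rewrite mem_filter mem_iota andbC. Qed.

Lemma mem_Lindex_inl n v i j :
  (inl (i, j) \in Lindex n v) = [&& i \in supp n v, j \in supp n v & (i < j)%N].
Proof.
rewrite mem_cat orbC (negbTE (introN mapP _)); last by case.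
rewrite (mem_map (fun ij ij' (e : inl ij = inl ij') => let: erefl := e in erefl)).
apply/allpairsPdep/idP => [[i' [j' [i_S]]] | /and3P [i_S j_S ij]].
  by rewrite mem_filter => /andP [ij' j_S] [-> ->]; rewrite i_S j_S.
by exists i, j; split; rewrite // mem_filter /= ij.
Qed.

Lemma mem_Lindex_inr n v k : (inr k \in Lindex n v) = (k \in nsupp n v).
Proof.
rewrite mem_cat (negbTE (introN mapP _)); last by case.
by rewrite (mem_map (fun k k' (e : inr k = inr k') => let: erefl := e in erefl)).
Qed.

Variant Lindex_spec n v : (nat * nat) + nat -> Prop :=
| LindexPair i j of i \in supp n v & j \in supp n v & (i < j)%N :
    Lindex_spec n v (inl (i, j))
| LindexOff k of k \in nsupp n v : Lindex_spec n v (inr k).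

Lemma LindexP n v d : d \in Lindex n v -> Lindex_spec n v d.
Proof.
case: d => [[i j] | k]; first by rewrite mem_Lindex_inl => /and3P [*]; constructor.
by rewrite mem_Lindex_inr; constructor.
Qed.

Lemma Lcoord_lincomb n v c xs d :
  size c = size xs -> (forall x, x \in xs -> size x = n) ->
  Lcoord v (lincomb n c xs) d = \sum_(m < size xs) (c`_m)%:~R * Lcoord v (nth [::] xs m) d.
Proof.
move=> sc sxs; case: d => [[i j] | k] /=; rewrite !nth_lincomb // !raddf_sum /=.
  by rewrite !mulr_suml -sumrB; apply: eq_bigr => m _; rewrite !intrM; ring.
by apply: eq_bigr => m _; rewrite intrM.
Qed.

Lemma Lcoord_self n v d : d \in Lindex n v -> Lcoord v v d = 0.
Proof.
case/LindexP => [i j | k]; rewrite ?mem_supp ?mem_nsupp /=.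
  by move=> /andP [_ vi] /andP [_ vj] _; rewrite !divff ?intr_eq0 ?subrr.
by move=> /andP [_ /eqP ->].
Qed.

Lemma Lcoord_vzero n v d : Lcoord v (vzero n) d = 0.
Proof. by case: d => [[i j] | k] /=; rewrite !nth_vzero ?mul0r ?subrr. Qed.

Lemma exists_common_point (s : seq nat) (f g : nat -> int) :
  (forall i j, i \in s -> j \in s -> f i <= g j) ->
  exists c, forall i, i \in s -> f i <= c <= g i.
Proof.
elim: s => [|x s IH] fg; first by exists 0.
have [|c c_s] := IH; first by move=> i j i_s j_s; apply: fg; rewrite inE ?i_s ?j_s orbT.
have fgx i : i \in x :: s -> (f i <= g x) && (f x <= g i) by move=> i_s; rewrite !fg ?mem_head.
exists (Num.min (Num.max c (f x)) (g x)) => i i_xs; move: (fgx i i_xs) (fgx x (mem_head _ _)).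
by case/predU1P: i_xs => [-> | /c_s]; lia.
Qed.

Lemma Forall_mem (T : eqType) (P : T -> Prop) (s : seq T) :
  List.Forall P s <-> forall x, x \in s -> P x.
Proof.
elim: s => [|x s IH]; first by split=> // _; constructor.
rewrite List.Forall_cons_iff IH; split=> [[Px Ps] y | Ps].
  by rewrite inE => /predU1P [-> | /Ps].
by split=> [|y y_s]; apply: Ps; rewrite inE ?eqxx ?y_s ?orbT.
Qed.

Lemma Forall_map_mem (T : eqType) U (P : U -> Prop) (f : T -> U) (s : seq T) :
  List.Forall P [seq f x | x <- s] <-> forall x, x \in s -> P (f x).
Proof. by rewrite List.Forall_map Forall_mem. Qed.

Definition meets_box n (A : seq int -> Prop) (a b : nat -> int) :=
  exists y, A y /\ forall p, (p < n)%N -> a p <= y`_p <= b p.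

Definition qlo (v : seq int) (a b : nat -> int) i := div_lo (a i) (b i) v`_i.
Definition qhi (v : seq int) (a b : nat -> int) i := div_hi (a i) (b i) v`_i.

(* Box constraints on [Lv n v y] implied by [a <= y <= b], where on the support
   [y_i / v_i] ranges over [[qlo i, qhi i]]. *)
Definition Lbox_lo v a b (d : (nat * nat) + nat) : int :=
  match d with inl (i, j) => qlo v a b i - qhi v a b j | inr k => a k end.
Definition Lbox_hi v a b (d : (nat * nat) + nat) : int :=
  match d with inl (i, j) => qhi v a b i - qlo v a b j | inr k => b k end.

Definition Lcoordz (v t : seq int) (d : (nat * nat) + nat) : int :=
  match d with inl (i, j) => (t`_i %/ v`_i)%Z - (t`_j %/ v`_j)%Z | inr k => t`_k end.

Section Reduction.
Variables (n : nat) (A : seq int -> Prop) (v : seq int).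
Hypotheses (sgA : subgroup n A) (Av : A v) (v_dvd : forall w, A w -> vdiv v w).

Lemma divzK_subgroup t i : A t -> v`_i != 0 -> (t`_i %/ v`_i)%Z * v`_i = t`_i.
Proof. by move=> At vi; rewrite divzK // v_dvd. Qed.

Lemma Lcoordz_Lcoord t d : A t -> d \in Lindex n v -> (Lcoordz v t d)%:~R = Lcoord v t d.
Proof.
move=> At /LindexP [i j | //]; rewrite !mem_supp => /andP [_ vi] /andP [_ vj] _ /=.
by rewrite -{2}(divzK_subgroup At vi) -{2}(divzK_subgroup At vj) !intrM !mulfK ?intr_eq0 ?intrB.
Qed.

Lemma LvImageE u :
  LvImage n v A u <-> exists t, A t /\ u = map (Lcoordz v t) (Lindex n v).
Proof.
have Lv_Lcoordz t : A t -> Lv n v t = map intr (map (Lcoordz v t) (Lindex n v)).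
  by move=> At; rewrite Lv_Lcoord -map_comp; apply/eq_in_map => d /(Lcoordz_Lcoord At).
split=> [[t [At Lu]] | [t [At ->]]]; exists t; split => //.
  by move: Lu; rewrite Lv_Lcoordz // => /(inj_map (@intr_inj rat)).
by rewrite Lv_Lcoordz.
Qed.

Lemma LvImage_preimages us : List.Forall (LvImage n v A) us ->
  exists ts, List.Forall A ts /\ us = [seq map (Lcoordz v t) (Lindex n v) | t <- ts].
Proof.
elim: us => [|u us IH]; first by exists [::].
case/List.Forall_cons_iff => /LvImageE [t [At ->]] /IH [ts [Ats ->]].
by exists (t :: ts); split=> //; constructor.
Qed.

(* [Lv n v] kills [v], so a relation among [v :: ts] maps to one among the images of [ts]. *)
Lemma lin_indep_cons ts : List.Forall A ts -> v != vzero n ->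
  lin_indep (Ldim n v) [seq map (Lcoordz v t) (Lindex n v) | t <- ts] ->
  lin_indep n (v :: ts).
Proof.
case: sgA => sizeA _ _ _ /Forall_mem Ats v_nz indep [|c0 cs] //= [scs] comb0.
have sizes x : x \in v :: ts -> size x = n by rewrite inE => /predU1P [-> | /Ats]; apply: sizeA.
set us := [seq map (Lcoordz v t) (Lindex n v) | t <- ts] in indep *.
have sizes_us u : u \in us -> size u = Ldim n v.
  by case/mapP => t _ ->; rewrite size_map size_Lindex.
have cs0 : cs = nseq (size cs) 0.
  apply: indep; first by rewrite size_map.
  apply: (@eq_from_nth _ 0) => [|p]; rewrite size_lincomb ?size_map ?size_vzero // => pL.
  set d := nth (inr 0%N) (Lindex n v) p.
  have d_L : d \in Lindex n v by rewrite mem_nth ?size_Lindex.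
  move: (congr1 (Lcoord v ^~ d) comb0); rewrite /= Lcoord_lincomb /= ?scs // Lcoord_vzero.
  rewrite big_ord_recl /= (Lcoord_self d_L) mulr0 add0r nth_vzero nth_lincomb ?size_map //.
  move=> sum0; apply/eqP; rewrite -(intr_eq0 rat) -sum0 raddf_sum /=.
  apply/eqP/eq_bigr => m _; rewrite intrM (nth_map [::]) // (nth_map (inr 0%N)) ?size_Lindex //.
  by rewrite Lcoordz_Lcoord ?size_Lindex //; apply/Ats/mem_nth.
have [i i_n vi] := exists_nth_neq0 (sizeA _ Av) v_nz.
move: (congr1 (nth 0 ^~ i) comb0); rewrite /= nth_lincomb /= ?scs // nth_vzero.
rewrite big_ord_recl big1 => [| m _]; last by rewrite lift0 /= cs0 nth_nseq if_same mul0r.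
by rewrite /= addr0 => /eqP; rewrite mulf_eq0 (negbTE vi) orbF => /eqP ->; rewrite {1}cs0 scs.
Qed.

Variables a b : nat -> int.
Notation lo := (qlo v a b).
Notation hi := (qhi v a b).

Lemma box_quotient y i : A y -> i \in supp n v ->
  (a i <= y`_i <= b i) = (lo i <= (y`_i %/ v`_i)%Z <= hi i).
Proof. by rewrite mem_supp => Ay /andP [_ vi]; rewrite -mul_bounds_div ?divzK_subgroup. Qed.

Lemma meets_box_Lcoordz : meets_box n A a b <->
  (forall i, i \in supp n v -> lo i <= hi i) /\
  exists t, A t /\ forall d, d \in Lindex n v ->
    Lbox_lo v a b d <= Lcoordz v t d <= Lbox_hi v a b d.
Proof.
case: sgA => sizeA _ AD _; split=> [[y [Ay y_box]] | [lo_hi [t [At t_box]]]].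
  have y_q i : i \in supp n v -> lo i <= (y`_i %/ v`_i)%Z <= hi i.
    by move=> i_S; rewrite -box_quotient // y_box //; move: i_S; rewrite mem_supp => /andP [].
  split=> [i /y_q /andP [lo_y y_hi] | ]; first exact: le_trans lo_y y_hi.
  exists y; split=> // d /LindexP [i j /y_q + /y_q + _ | k].
    by rewrite /=; lia.
  by rewrite mem_nsupp => /andP [kn _]; apply: y_box.
have shifts_meet i j : i \in supp n v -> j \in supp n v ->
    lo i - (t`_i %/ v`_i)%Z <= hi j - (t`_j %/ v`_j)%Z.
  move=> i_S j_S; case: (ltngtP i j) => [ij | ji | <-]; last by move: (lo_hi i i_S); lia.
    by move: (t_box (inl (i, j))); rewrite mem_Lindex_inl i_S j_S ij /=; lia.
  by move: (t_box (inl (j, i))); rewrite mem_Lindex_inl i_S j_S ji /=; lia.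
(* Shifting [t] by [c v] moves every [t_i / v_i] by [c]. *)
have [c c_meets] := exists_common_point shifts_meet.
exists (vadd t (vscale c v)); split; first by apply: AD; last exact: subgroup_vscale sgA Av.
move=> p pn; rewrite nth_vadd ?size_vscale ?sizeA // nth_vscale.
have [vp0 | vp] := eqVneq v`_p 0.
  rewrite vp0 mulr0 addr0; move: (t_box (inr p)).
  by rewrite mem_Lindex_inr mem_nsupp pn vp0 /=; apply.
have p_S : p \in supp n v by rewrite mem_supp pn vp.
rewrite -(divzK_subgroup At vp) -mulrDl mul_bounds_div //.
by move: (c_meets p p_S); rewrite /qlo /qhi; lia.
Qed.

Lemma meets_box_LvImage :
  meets_box (Ldim n v) (LvImage n v A)
    (Lbox_lo v a b \o nth (inr 0%N) (Lindex n v)) (Lbox_hi v a b \o nth (inr 0%N) (Lindex n v))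
  <-> exists t, A t /\ forall d, d \in Lindex n v ->
        Lbox_lo v a b d <= Lcoordz v t d <= Lbox_hi v a b d.
Proof.
rewrite -size_Lindex; split=> [[u [/LvImageE [t [At ->]] u_box]] | [t [At t_box]]].
  exists t; split=> // d d_L; rewrite -(nth_index (inr 0%N) d_L).
  move: (u_box (index d (Lindex n v))); rewrite index_mem => /(_ d_L) /=.
  by rewrite (nth_map (inr 0%N)) ?index_mem.
exists (map (Lcoordz v t) (Lindex n v)); split; first by apply/LvImageE; exists t.
by move=> p pL /=; rewrite (nth_map (inr 0%N)) // t_box ?mem_nth.
Qed.

End Reduction.

Definition smod_linear_bounds N j n (al be : nat -> seq int -> int) :=
  forall p, (p < n)%N -> smod_linear N j (al p) /\ smod_linear N j (be p).

Section BoundsOrder.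
Variables (N j n : nat) (v : seq int) (al be : nat -> seq int -> int).
Hypothesis al_be : smod_linear_bounds N j n al be.

Lemma mod_linear_qgap i k : i \in supp n v -> k \in supp n v ->
  mod_linear N j.+1 (fun x => qhi v (al^~ x) (be^~ x) k - qlo v (al^~ x) (be^~ x) i).
Proof.
rewrite !mem_supp => /andP [i_n vi] /andP [k_n vk].
have [ali bei] := al_be i_n; have [alk bek] := al_be k_n.
apply: (@mod_linear_step_signed _ _ (fun x => if 0 < v`_k then be k x else al k x)
                                   (fun x => if 0 < v`_i then al i x else be i x)) => //.
  by case: (0 < v`_k).
by case: (0 < v`_i).
Qed.

Lemma smod_linear_Lbox d : d \in Lindex n v ->
  smod_linear N j.+1 (fun x => Lbox_lo v (al^~ x) (be^~ x) d) /\
  smod_linear N j.+1 (fun x => Lbox_hi v (al^~ x) (be^~ x) d).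
Proof.
case/LindexP => [i k i_S k_S _ | k]; last first.
  by rewrite mem_nsupp => /andP [/al_be [alk bek] _]; split; apply: smod_linear_lift.
split; last by left; apply: mod_linear_qgap.
apply: smod_linear_ext (smod_linearN (or_introl (mod_linear_qgap i_S k_S))) _.
by move=> x; rewrite opprB.
Qed.

End BoundsOrder.

Definition has_indep n (A : seq int -> Prop) d :=
  exists xs : seq (seq int), size xs = d /\ List.Forall A xs /\ lin_indep n xs.

Definition box_describable n (A : seq int -> Prop) d :=
  forall N j al be, smod_linear_bounds N j n al be ->
  exists E : seq (seq int -> int), List.Forall (mod_linear N (d + j)) E /\
    forall x, meets_box n A (al^~ x) (be^~ x) <-> List.Forall (fun l => 0 <= l x) E.

Lemma Lbox_zero_iff n v a b :
  (forall i, i \in supp n v -> qlo v a b i <= qhi v a b i) /\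
  (forall d, d \in Lindex n v -> Lbox_lo v a b d <= 0 <= Lbox_hi v a b d) <->
  (forall i k, i \in supp n v -> k \in supp n v -> qlo v a b i <= qhi v a b k) /\
  (forall k, k \in nsupp n v -> a k <= 0 <= b k).
Proof.
split=> [[diag box] | [gaps off]].
  split=> [i k i_S k_S | k k_N]; last by move: (box (inr k)); rewrite mem_Lindex_inr; apply.
  case: (ltngtP i k) => [ik | ki | <-]; last exact: diag.
    by move: (box (inl (i, k))); rewrite mem_Lindex_inl i_S k_S ik /=; lia.
  by move: (box (inl (k, i))); rewrite mem_Lindex_inl i_S k_S ki /=; lia.
split=> [i i_S | d /LindexP [i k i_S k_S _ | k /off //]]; first exact: gaps.
by move: (gaps i k i_S k_S) (gaps k i k_S i_S) => /=; lia.
Qed.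

Section DivisorStep.
Variables (n : nat) (A : seq int -> Prop) (v : seq int).
Hypotheses (sgA : subgroup n A) (Av : A v) (v_nz : v != vzero n).
Hypothesis v_dvd : forall w, A w -> vdiv v w.

Lemma has_indep1 : has_indep n A 1.
Proof.
exists [:: v]; split=> //; split; first by constructor.
by apply: (lin_indep_cons sgA Av v_dvd (List.Forall_nil _) v_nz) => -[].
Qed.

Lemma has_indepS d : has_indep (Ldim n v) (LvImage n v A) d -> has_indep n A d.+1.
Proof.
case=> us [<- [/(LvImage_preimages v_dvd) [ts [Ats ->]] indep]].
exists (v :: ts); rewrite size_map; split=> //; split; first by constructor.
exact: (lin_indep_cons sgA Av v_dvd Ats v_nz indep).
Qed.

Lemma meets_box_reduce a b : meets_box n A a b <->
  (forall i, i \in supp n v -> qlo v a b i <= qhi v a b i) /\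
  meets_box (Ldim n v) (LvImage n v A)
    (Lbox_lo v a b \o nth (inr 0%N) (Lindex n v)) (Lbox_hi v a b \o nth (inr 0%N) (Lindex n v)).
Proof. by rewrite (meets_box_Lcoordz sgA Av v_dvd) (meets_box_LvImage n v_dvd). Qed.

Lemma box_describableS d :
  box_describable (Ldim n v) (LvImage n v A) d -> box_describable n A d.+1.
Proof.
move=> describeB N j al be al_be.
have [|EB [EB_order EB_box]] := describeB N j.+1
    (fun p x => Lbox_lo v (al^~ x) (be^~ x) (nth (inr 0%N) (Lindex n v) p))
    (fun p x => Lbox_hi v (al^~ x) (be^~ x) (nth (inr 0%N) (Lindex n v) p)).
  by move=> p pL; apply: (smod_linear_Lbox al_be); rewrite mem_nth ?size_Lindex.
exists ([seq (fun x => qhi v (al^~ x) (be^~ x) i - qlo v (al^~ x) (be^~ x) i)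
          | i <- supp n v] ++ EB).
split.
  apply/List.Forall_app; rewrite Forall_map_mem addSnnS; split=> // i i_S.
  by apply: mod_linear_mono (mod_linear_qgap al_be i_S i_S); rewrite addnS ltnS leq_addl.
move=> x; rewrite meets_box_reduce List.Forall_app Forall_map_mem -EB_box.
by split=> -[diag box]; split=> // i /diag; rewrite subr_ge0.
Qed.

Lemma meets_box_Lzero a b : (forall u, LvImage n v A u <-> u = vzero (Ldim n v)) ->
  meets_box (Ldim n v) (LvImage n v A)
    (Lbox_lo v a b \o nth (inr 0%N) (Lindex n v)) (Lbox_hi v a b \o nth (inr 0%N) (Lindex n v))
  <-> forall d, d \in Lindex n v -> Lbox_lo v a b d <= 0 <= Lbox_hi v a b d.
Proof.
move=> LA0; split=> [[u [/LA0 -> u_box]] d d_L | box0].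
  move: (u_box (index d (Lindex n v))); rewrite -size_Lindex index_mem => /(_ d_L).
  by rewrite nth_vzero /= nth_index.
exists (vzero (Ldim n v)); split; first exact/LA0.
by move=> p; rewrite -size_Lindex nth_vzero => pL; apply/box0/mem_nth.
Qed.

(* Here [A] consists of the multiples of [v], so the box meets [A] iff the intervals
   [[qlo i, qhi i]] meet pairwise and the bounds straddle 0 off the support. *)
Lemma box_describable1 :
  (forall u, LvImage n v A u <-> u = vzero (Ldim n v)) -> box_describable n A 1.
Proof.
move=> LA0 N j al be al_be.
exists ([seq (fun x => qhi v (al^~ x) (be^~ x) ik.2 - qlo v (al^~ x) (be^~ x) ik.1)
          | ik <- [seq (i, k) | i <- supp n v, k <- supp n v]]
        ++ [seq (fun x => floor_div (- al k x) 1 - ceil_div (- al k x) 2) | k <- nsupp n v]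
        ++ [seq (fun x => floor_div (be k x) 1 - ceil_div (be k x) 2) | k <- nsupp n v]).
split.
  rewrite !List.Forall_app !Forall_map_mem.
  split=> [_ /allpairsP [[i k] [/= i_S k_S ->]] | ]; first exact: (mod_linear_qgap al_be i_S k_S).
  by split=> k; rewrite mem_nsupp => /andP [/al_be [alk bek] _];
    apply: mod_linear_step_signed => //; apply: smod_linearN.
move=> x; rewrite meets_box_reduce (meets_box_Lzero _ _ LA0) Lbox_zero_iff.
rewrite !List.Forall_app !Forall_map_mem.
split=> [[gaps off] | [gaps [neg_lo pos_hi]]].
  split=> [_ /allpairsP [[i k] [/= i_S k_S ->]] | ]; first by rewrite subr_ge0 gaps.
  by split=> k /off /andP [lo0 hi0]; rewrite floor_div1_ceil_div2_ge0 ?oppr_ge0.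
split=> [i k i_S k_S | k k_N]; first by rewrite -subr_ge0 (gaps (i, k)) ?allpairs_f.
by move: (neg_lo k k_N) (pos_hi k k_N); rewrite !floor_div1_ceil_div2_ge0 oppr_ge0 => -> ->.
Qed.

End DivisorStep.

(* [classE] occurs under [\/] in its own constructor, so its generated induction
   principle has no induction hypothesis: recurse on the derivation directly. *)
Lemma classE_describable n A :
  classE n A -> exists d, has_indep n A d /\ box_describable n A d.
Proof.
move: n A; fix IH 3 => n A [{}n {}A v sgA Av v_nz v_dvd [LA0 | /IH [d [indep describe]]]].
  by exists 1%N; split; [exact: has_indep1 sgA Av v_nz v_dvd | exact: box_describable1 LA0].
by exists d.+1; split; [exact: has_indepS indep | exact: box_describableS describe].
Qed.

Lemma modlin_tests N r E : List.Forall (mod_linear N r) E ->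
  exists E', (forall l, List.In l E' -> modlin N r l) /\
    forall x, List.Forall (fun l => 0 <= l x) E <-> (forall l, List.In l E' -> 0 <= l x).
Proof.
elim=> [|l {}E lr _ [E' [E'_modlin E'_tests]]].
  by exists [::]; split=> // x; split=> // _; constructor.
have [c c_gt0 cl] := mod_linear_modlin lr.
exists ((fun x => c * l x) :: E'); split=> [_ [<- | /E'_modlin] // | x].
rewrite List.Forall_cons_iff E'_tests; split=> [[l_x E'_x] _ [<- | /E'_x] // | tests].
  by rewrite pmulr_rge0.
split=> [|l' l'_E']; last by apply: tests; right.
by rewrite -(pmulr_rge0 _ c_gt0); apply: (tests (fun x => c * l x)); left.
Qed.

Lemma nth_interleave (a b : seq int) p : (p < minn (size a) (size b))%N ->
  (interleave a b)`_(2 * p) = a`_p /\ (interleave a b)`_(2 * p).+1 = b`_p.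
Proof.
elim: a b p => [|x a IH] [|y b] [|p] // p_lt.
have {}p_lt : (p < minn (size a) (size b))%N by rewrite -ltnS -minnSS.
by rewrite mulnS add2n; apply: IH.
Qed.

Theorem mainTheorem1 (n r : nat) (A : seq int -> Prop) :
  (1 <= n)%N -> classE n A -> grank n A r ->
  exists E : seq (seq int -> int),
    (forall l, List.In l E -> modlin (2 * n)%N r l) /\
    forall a b : seq int, size a = n -> size b = n ->
      (forall i : nat, (i < n)%N -> a`_i <= b`_i) ->
      ((exists x, A x /\ forall i : nat, (i < n)%N -> a`_i <= x`_i <= b`_i)
       <-> (forall l, List.In l E -> 0 <= l (interleave a b))).
Proof.
move=> _ /classE_describable [d [[xs [<- [Axs indep]]] describe]] [_ rank_max].
have [|E [E_order E_box]] :=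
  describe (2 * n)%N 0%N (fun p x => x`_(2 * p)) (fun p x => x`_(2 * p).+1).
  by move=> p pn; split; left; apply: mod_linear_proj; lia.
have [|E' [E'_modlin E'_box]] := @modlin_tests (2 * n)%N r E.
  apply: List.Forall_impl E_order => l; apply: mod_linear_mono.
  by rewrite addn0; apply: rank_max => //; apply/List.Forall_forall.
exists E'; split=> // a b sa sb _; rewrite -E'_box -E_box.
have ab_at p : (p < n)%N -> (interleave a b)`_(2 * p) = a`_p /\ (interleave a b)`_(2 * p).+1 = b`_p.
  by move=> pn; apply: nth_interleave; rewrite sa sb minnn.
split=> -[y [Ay y_box]]; exists y; split=> // p pn; have [ap bp] := ab_at p pn.
  by rewrite /= ap bp; apply: y_box.
by rewrite -ap -bp; apply: y_box.
Qed.
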